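(* Assume the synchronous bandit is unichain and strictly indexable (states labeled $\nu_1>\dots>\nu_d$), and let $\rho(\mathbf m)$ be the instantaneous bandit-averaged reward of WIP when the $N$-bandit system is in configuration $\mathbf m$. Then (i) for all $\mathbf m\in\Delta^d$, $$\rho(\mathbf m)=\sum_{i=1}^{s(\mathbf m)-1} m_i R^1_{i} + \Big(\alpha-\sum_{i=1}^{s(\mathbf m)-1}m_i\Big)R^1_{s(\mathbf m)} + \Big(\sum_{i=1}^{s(\mathbf m)}m_i - \alpha\Big)R^0_{s(\mathbf m)} + \sum_{i=s(\mathbf m)+1}^{d} m_i R^0_{i},$$ so $\rho$ is affine on each zone $\mathcal Z_i=\{\mathbf m: s(\mathbf m)=i\}$; and (ii) $\rho(\mathbf m^* )=V^{(1)}_{\mathrm{rel}}(\alpha)$, where $\mathbf m^*$ is the unique fixed point of $\phi$.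
   Context: Synchronous restless bandit model: $d\times d$ stochastic matrices $\mathbf P^0,\mathbf P^1$, rewards $\mathbf R^0,\mathbf R^1\in\mathbb R^d$, $\alpha\in(0,1)$; $N$ bandits with $\alpha N\in\mathbb N$ evolve independently given actions with $\mathbb P(S_n(t+1)=j\mid S_n(t)=i,a_n(t)=a)=P^a_{ij}$, reward $R^a_i$ per bandit per step. $V^{(1)}_{\mathrm{rel}}(\alpha)$ is the supremum over stationary Markov single-bandit policies of the long-run average expected reward subject to the long-run fraction of active time being $\alpha$. Unichain: under every policy a single bandit's states form one recurrent class. Indexability/Whittle index: the subsidy-$\nu$ problem is the single-bandit MDP where action $0$ in state $i$ earns $R^0_i+\nu$ and action $1$ earns $R^1_i$ (average reward); $\omega(\nu)$ the set of states where some optimal policy is passive; indexable if $\omega(\nu)\subseteq\omega(\nu')$ for $\nu\le\nu'$; $\nu_i=\inf\{\nu:i\in\omega(\nu)\}$; strictly indexable: distinct indices. WIP activates at each step the $\alpha N$ bandits with highest indices. $\Delta^d=\{\mathbf m\in[0,1]^d:\sum m_i=1\}$; configuration = vector of fractions of bandits in each state; $s(\mathbf m)$ the unique $s$ with $\sum_{i<s}m_i\le\alpha<\sum_{i\le s}m_i$; $\phi_j(\mathbf m)=\sum_{i=1}^{s(\mathbf m)-1} m_i P^1_{ij} + (\alpha-\sum_{i=1}^{s(\mathbf m)-1}m_i)P^1_{s(\mathbf m)j} + (\sum_{i=1}^{s(\mathbf m)}m_i - \alpha)P^0_{s(\mathbf m)j} + \sum_{i=s(\mathbf m)+1}^{d}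 m_i P^0_{ij}$, which has a unique fixed point $\mathbf m^*$ under these assumptions. *)

From HB Require Import structures.
From mathcomp Require Import all_boot all_order all_algebra.
From mathcomp Require Import all_classical all_reals all_analysis.
Set Implicit Arguments.
Unset Strict Implicit.
Unset Printing Implicit Defensive.
Import Order.TTheory GRing.Theory Num.Theory.
Import numFieldNormedType.Exports.
Local Open Scope classical_set_scope.
Local Open Scope ring_scope.

(* States of a single bandit are 'I_d, labelled 0,...,d-1 (paper: 1,...,d). *)

Section Bandit.
Variables (R : realType) (d : nat).

Definition stochastic (P : 'M[R]_d) : Prop :=
  (forall i j, 0 <= P i j) /\ (forall i, \sum_(j < d) P i j = 1).

Definition mpow (P : 'M[R]_d) (t : nat) : 'M[R]_d := iter t (mulmx P) 1%:M.

(* A (possibly randomized) stationary Markov policy: pol i = probability of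
   activating (action 1) in state i.  Deterministic policies take values in {0,1}. *)
Definition polP (P0 P1 : 'M[R]_d) (pol : 'I_d -> R) : 'M[R]_d :=
  \matrix_(i, j) (pol i * P1 i j + (1 - pol i) * P0 i j).
Definition polR (R0 R1 : 'I_d -> R) (pol : 'I_d -> R) : 'I_d -> R :=
  fun i => pol i * R1 i + (1 - pol i) * R0 i.

Definition longrun_avg (P : 'M[R]_d) (f : 'I_d -> R) (x : 'I_d) : R :=
  limn (fun T : nat =>
          (T.+1)%:R^-1 * \sum_(t < T.+1) \sum_(j < d) mpow P t x j * f j).

Definition irreducible (P : 'M[R]_d) : Prop :=
  forall i j : 'I_d, exists t : nat, 0 < mpow P t i j.

Definition bool_pol (pi : 'I_d -> bool) : 'I_d -> R := fun i => (pi i)%:R.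

(* Unichain: under every (stationary deterministic, hence also every stationary
   randomized) policy the states form one recurrent class. *)
Definition unichain (P0 P1 : 'M[R]_d) : Prop :=
  forall pi : 'I_d -> bool, irreducible (polP P0 P1 (bool_pol pi)).

Definition subsidy_gain (P0 P1 : 'M[R]_d) (R0 R1 : 'I_d -> R) (nu : R)
  (pi : 'I_d -> bool) (x : 'I_d) : R :=
  longrun_avg (polP P0 P1 (bool_pol pi))
              (polR (fun i => R0 i + nu) R1 (bool_pol pi)) x.

Definition subsidy_optimal (P0 P1 : 'M[R]_d) (R0 R1 : 'I_d -> R) (nu : R)
  (pi : 'I_d -> bool) : Prop :=
  forall (pi' : 'I_d -> bool) (x : 'I_d),
    subsidy_gain P0 P1 R0 R1 nu pi' x <= subsidy_gain P0 P1 R0 R1 nu pi x.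

Definition omega (P0 P1 : 'M[R]_d) (R0 R1 : 'I_d -> R) (nu : R) : set 'I_d :=
  [set i | exists pi, subsidy_optimal P0 P1 R0 R1 nu pi /\ pi i = false].

Definition indexable (P0 P1 : 'M[R]_d) (R0 R1 : 'I_d -> R) : Prop :=
  forall nu nu' : R, nu <= nu' -> omega P0 P1 R0 R1 nu `<=` omega P0 P1 R0 R1 nu'.

Definition whittle_index (P0 P1 : 'M[R]_d) (R0 R1 : 'I_d -> R) (i : 'I_d) : R :=
  inf [set nu : R | omega P0 P1 R0 R1 nu i].

Definition strictly_indexable (P0 P1 : 'M[R]_d) (R0 R1 : 'I_d -> R) : Prop :=
  indexable P0 P1 R0 R1 /\ injective (whittle_index P0 P1 R0 R1).

Definition valid_pol (pol : 'I_d -> R) : Prop := forall i, 0 <= pol i <= 1.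

Definition Vrel (P0 P1 : 'M[R]_d) (R0 R1 : 'I_d -> R) (alpha : R) : R :=
  sup [set g : R | exists (pol : 'I_d -> R) (x : 'I_d),
        [/\ valid_pol pol,
            (forall y, longrun_avg (polP P0 P1 pol) pol y = alpha) &
            g = longrun_avg (polP P0 P1 pol) (polR R0 R1 pol) x]].

Definition simplex (m : 'I_d -> R) : Prop :=
  (forall i, 0 <= m i) /\ \sum_(i < d) m i = 1.

Definition s_of (alpha : R) (m : 'I_d -> R) : option 'I_d :=
  [pick s : 'I_d | (\sum_(i < d | (i < s)%N) m i <= alpha)
                    && (alpha < \sum_(i < d | (i <= s)%N) m i)].

Definition rho_formula (R0 R1 : 'I_d -> R) (alpha : R) (m : 'I_d -> R) : R :=
  match s_of alpha m with
  | Some s =>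
      \sum_(i < d | (i < s)%N) m i * R1 i
      + (alpha - \sum_(i < d | (i < s)%N) m i) * R1 s
      + (\sum_(i < d | (i <= s)%N) m i - alpha) * R0 s
      + \sum_(i < d | (s < i)%N) m i * R0 i
  | None => 0
  end.

Definition phi (P0 P1 : 'M[R]_d) (alpha : R) (m : 'I_d -> R) : 'I_d -> R :=
  fun j =>
  match s_of alpha m with
  | Some s =>
      \sum_(i < d | (i < s)%N) m i * P1 i j
      + (alpha - \sum_(i < d | (i < s)%N) m i) * P1 s j
      + (\sum_(i < d | (i <= s)%N) m i - alpha) * P0 s j
      + \sum_(i < d | (s < i)%N) m i * P0 i j
  | None => 0
  end.

Definition config (N : nat) (S : 'I_N -> 'I_d) : 'I_d -> R :=
  fun i => #|[set n | S n == i]|%:R / N%:R.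

Definition wip_action (nu : 'I_d -> R) (N K : nat) (S : 'I_N -> 'I_d)
  (a : 'I_N -> bool) : Prop :=
  #|[set n | a n]| = K /\
  (forall n n' : 'I_N, a n -> ~~ a n' -> nu (S n') <= nu (S n)).

Definition inst_reward (R0 R1 : 'I_d -> R) (N : nat) (S : 'I_N -> 'I_d)
  (a : 'I_N -> bool) : R :=
  N%:R^-1 * \sum_(n < N) (if a n then R1 (S n) else R0 (S n)).

End Bandit.

(* Part (i) is a counting argument.  WIP activates the K = alpha N bandits of
   highest index; indices decrease strictly with the label, so every bandit in
   a state below the zone index s = s(m) is active, every bandit above s is
   passive, and the remaining activations fall in state s.  Summing rewards
   state by state gives the zone formula rho(m).

   Part (ii) is a Lagrangian (LP-duality) argument.  The fixed point m of phi
   is the stationary distribution of the threshold policy of zone s (active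
   below s, active with the right probability in s, passive above), which
   activates a mass alpha and earns rho(m).  At the subsidy nu_s, the average
   reward optimality equation has a solution (g, h) for which activating is
   optimal in the states i <= s and resting in the states i >= s (this is
   where indexability enters).  Weak duality then bounds the reward of every
   admissible relaxed policy by g - nu_s (1 - alpha), with equality for the
   threshold policy; hence rho(m) = V_rel(alpha). *)

From HB Require Import structures.
From mathcomp Require Import all_boot all_order all_algebra.
From mathcomp Require Import all_classical all_reals all_analysis.
From mathcomp Require Import ring lra.
Import Order.TTheory GRing.Theory Num.Theory.
Import numFieldNormedType.Exports.
Set Implicit Arguments.
Unset Strict Implicit.
Unset Printing Implicit Defensive.
Local Open Scope classical_set_scope.
Local Open Scope ring_scope.

Section MarkovChains.
Variables (R : realType) (d : nat).
Implicit Types (P A B : 'M[R]_d) (h mu : 'I_d -> R).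

Lemma mpowSr P t : mpow P t.+1 = mpow P t *m P.
Proof.
elim: t => [|t IH]; first by rewrite /mpow /= mul1mx mulmx1.
have -> : mpow P t.+2 = P *m mpow P t.+1 by [].
by rewrite {1}IH mulmxA.
Qed.

Lemma stochastic1 : stochastic (1%:M : 'M[R]_d).
Proof.
split=> [i j|i]; first by rewrite mxE; case: (i == j).
rewrite (bigD1 i) //= mxE eqxx big1 ?addr0 // => j /negbTE.
by rewrite mxE eq_sym => ->.
Qed.

Lemma stochastic_mul A B : stochastic A -> stochastic B -> stochastic (A *m B).
Proof.
move=> [A0 A1] [B0 B1]; split=> [i j|i].
  by rewrite mxE; apply: sumr_ge0 => k _; exact: mulr_ge0.
under eq_bigr do rewrite mxE.
rewrite exchange_big /= -[RHS](A1 i); apply: eq_bigr => k _.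
by rewrite -mulr_sumr B1 mulr1.
Qed.

Lemma stochastic_mpow P t : stochastic P -> stochastic (mpow P t).
Proof.
move=> HP; elim: t => [|t IH]; first exact: stochastic1.
exact: stochastic_mul.
Qed.

Lemma stochastic_le1 P i j : stochastic P -> P i j <= 1.
Proof.
move=> [P0 P1]; rewrite -(P1 i) (bigD1 j) //= lerDl.
exact: sumr_ge0.
Qed.

Lemma sum_exchange P mu h :
  \sum_(i < d) mu i * \sum_(j < d) P i j * h j
  = \sum_(j < d) (\sum_(i < d) mu i * P i j) * h j.
Proof.
under eq_bigr do rewrite mulr_sumr.
rewrite exchange_big /=; apply: eq_bigr => j _.
by rewrite mulr_suml; apply: eq_bigr => i _; rewrite mulrA.
Qed.

Lemma stationary_mean P mu h :
  (forall j, \sum_(i < d) mu i * P i j = mu j) ->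
  \sum_(i < d) mu i * \sum_(j < d) P i j * h j = \sum_(j < d) mu j * h j.
Proof. by move=> Hmu; rewrite sum_exchange; apply: eq_bigr => j _; rewrite Hmu. Qed.

Lemma mpow_stationary P mu :
  (forall j, \sum_(i < d) mu i * P i j = mu j) ->
  forall t j, \sum_(i < d) mu i * mpow P t i j = mu j.
Proof.
move=> Hmu; elim=> [|t IH] j.
  rewrite (bigD1 j) //= mxE eqxx mulr1 big1 ?addr0 // => i /negbTE Hi.
  by rewrite mxE Hi mulr0.
rewrite mpowSr; under eq_bigr do rewrite mxE.
by rewrite sum_exchange; under eq_bigr do rewrite IH.
Qed.

Lemma mpow_harmonic P h :
  (forall i, \sum_(j < d) P i j * h j = h i) ->
  forall t i, \sum_(j < d) mpow P t i j * h j = h i.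
Proof.
move=> Hh; elim=> [|t IH] i.
  rewrite (bigD1 i) //= mxE eqxx mul1r big1 ?addr0 // => j /negbTE Hj.
  by rewrite mxE eq_sym Hj mul0r.
rewrite mpowSr -[RHS]IH.
under eq_bigr do rewrite mxE mulr_suml.
rewrite exchange_big /=; apply: eq_bigr => k _.
by rewrite -(Hh k) mulr_sumr; apply: eq_bigr => j _; rewrite mulrA.
Qed.

Section Poisson.
Variables (P : 'M[R]_d) (f h : 'I_d -> R) (g : R) (x : 'I_d).
Hypothesis HP : stochastic P.
Hypothesis Hpoisson : forall i, f i + \sum_(j < d) P i j * h j = g + h i.

Let bias_at (t : nat) : R := \sum_(j < d) mpow P t x j * h j.

Lemma poisson_step t :
  \sum_(j < d) mpow P t x j * f j = g + bias_at t - bias_at t.+1.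
Proof.
have -> : \sum_(j < d) mpow P t x j * f j =
   \sum_(j < d) mpow P t x j * (g + h j - \sum_(k < d) P j k * h k).
  by apply: eq_bigr => j _; rewrite -(Hpoisson j) addrK.
under eq_bigr do rewrite !mulrDr mulrN.
rewrite !big_split /= sumrN -mulr_suml (stochastic_mpow t HP).2 mul1r.
rewrite /bias_at mpowSr sum_exchange; congr (_ + _ - _).
by apply: eq_bigr => k _; rewrite mxE.
Qed.

Lemma cesaro_telescope T :
  (T.+1)%:R^-1 * \sum_(t < T.+1) \sum_(j < d) mpow P t x j * f j
  = g + (bias_at 0 - bias_at T.+1) / (T.+1)%:R.
Proof.
under eq_bigr do rewrite poisson_step.
have -> : \sum_(t < T.+1) (g + bias_at t - bias_at t.+1)
          = T.+1%:R * g + (bias_at 0 - bias_at T.+1).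
  elim: T => [|T IH]; first by rewrite big_ord1 mul1r addrA.
  by rewrite big_ord_recr /= IH -[T.+2%:R]natr1; ring.
by rewrite mulrDr mulrA mulVf ?pnatr_eq0 // mul1r mulrC.
Qed.

(* The boundary term stays bounded: each row of P^t is a probability vector. *)
Lemma bias_at_bounded t : `|bias_at t| <= \sum_(j < d) `|h j|.
Proof.
apply: (le_trans (ler_norm_sum _ _ _)); apply: ler_sum => j _.
rewrite normrM ler_piMl // ger0_norm; last exact: (stochastic_mpow t HP).1.
exact: stochastic_le1 (stochastic_mpow t HP).
Qed.

Lemma longrun_avg_poisson : longrun_avg P f x = g.
Proof.
apply: cvg_lim => //; apply/cvgrPdist_le => eps eps0.
set H := \sum_(j < d) `|h j|.
near=> T.
rewrite cesaro_telescope opprD addNKr normrN normrM normfV.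
rewrite (ger0_norm (ler0n _ T.+1)) ler_pdivrMr ?ltr0n //.
apply: (le_trans (ler_normB _ _)).
apply: (le_trans (lerD (bias_at_bounded _) (bias_at_bounded _))).
have : 2 * H / eps < (T.+1)%:R.
  apply: (lt_le_trans (truncnS_gt _)); rewrite ler_nat ltnS.
  near: T; exact: nbhs_infty_ge.
rewrite ltr_pdivrMr // => /ltW; rewrite -/H; lra.
Unshelve. all: by end_near.
Qed.

End Poisson.

(* Maximum principle: for an irreducible chain, harmonic functions are constant. *)
Lemma harmonic_const P h :
  stochastic P -> irreducible P ->
  (forall i, \sum_(j < d) P i j * h j = h i) -> forall i j, h i = h j.
Proof.
move=> HP Hirr Hh i1 j1.
have [i0 _ Hi0] := @arg_maxP _ _ 'I_d i1 xpredT h isT.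
suff all0 j : h j = h i0 by rewrite !all0.
have [t Ht] := Hirr i0 j.
have Hs : \sum_(l < d) mpow P t i0 l * (h i0 - h l) = 0.
  under eq_bigr do rewrite mulrBr.
  by rewrite sumrB (mpow_harmonic Hh) -mulr_suml (stochastic_mpow t HP).2 mul1r subrr.
have Hnn l : true -> 0 <= mpow P t i0 l * (h i0 - h l).
  move=> _; apply: mulr_ge0; first exact: (stochastic_mpow t HP).1.
  by rewrite subr_ge0; exact: Hi0.
have /eqP := @psumr_eq0P _ _ _ _ Hnn Hs j isT.
by rewrite mulf_eq0 (gt_eqF Ht) /= subr_eq0 => /eqP.
Qed.

Lemma left_kernel A (v : 'cV[R]_d) :
  v != 0 -> A *m v = 0 -> exists2 u : 'rV[R]_d, u != 0 & u *m A = 0.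
Proof.
move=> v0 Av; apply/det0P; apply: contraNT v0 => detA.
have uA : A \in unitmx by rewrite unitmxE unitfE.
by rewrite -(mulKmx uA v) Av mulmx0.
Qed.

Lemma left_injective_unitmx A :
  (forall u : 'rV[R]_d, u *m A = 0 -> u = 0) -> A \in unitmx.
Proof.
move=> inj; rewrite unitmxE unitfE; apply/negP => /det0P [u u0 uA].
by move/eqP: u0; apply; apply: inj.
Qed.

Section Stationary.
Variable P : 'M[R]_d.
Hypotheses (HP : stochastic P) (Hirr : irreducible P).

(* 1 is an eigenvalue of P (the constant vector is a right eigenvector), so
   some nonzero row vector is invariant. *)
Lemma invariant_row_exists : (0 < d)%N ->
  exists u : 'I_d -> R, (exists k, u k != 0) /\
                        forall j, \sum_(i < d) u i * P i j = u j.
Proof.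
move=> d0; pose i0 : 'I_d := Ordinal d0.
have v0 : (const_mx 1 : 'cV[R]_d) != 0.
  by apply/negP => /eqP/matrixP/(_ i0 ord0); rewrite !mxE => /eqP; rewrite oner_eq0.
have Av : (1%:M - P) *m const_mx 1 = 0 :> 'cV[R]_d.
  apply/matrixP => i k; rewrite !mxE.
  under eq_bigr do rewrite !mxE mulr1.
  rewrite sumrB (bigD1 i) //= eqxx big1 ?addr0 ?HP.2 ?subrr // => j.
  by rewrite eq_sym => /negbTE ->.
have [u u0 uA] := left_kernel v0 Av.
exists (fun i => u 0 i); split.
  apply/existsP; apply: contraNT u0 => /existsPn Hall.
  by apply/eqP/matrixP => a b; rewrite (ord1 a) mxE; apply/eqP/negPn/Hall.
move=> j; move/matrixP: uA => /(_ 0 j); rewrite !mxE.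
under eq_bigr do rewrite !mxE mulrBr.
rewrite sumrB (bigD1 j) //= eqxx mulr1 big1 ?addr0 => [/eqP|i /negbTE ->].
  by rewrite subr_eq0 => /eqP.
by rewrite mulr0.
Qed.

(* The absolute value of an invariant row is invariant: it is sub-invariant
   and has the same total mass as its image. *)
Lemma abs_invariant u :
  (forall j, \sum_(i < d) u i * P i j = u j) ->
  forall j, \sum_(i < d) `|u i| * P i j = `|u j|.
Proof.
move=> Hu.
have Hle j : `|u j| <= \sum_(i < d) `|u i| * P i j.
  rewrite -Hu; apply: (le_trans (ler_norm_sum _ _ _)).
  by apply: ler_sum => i _; rewrite normrM (ger0_norm (HP.1 i j)).
have Hs : \sum_(j < d) (\sum_(i < d) `|u i| * P i j - `|u j|) = 0.
  rewrite sumrB exchange_big /= (eq_bigr (fun i => `|u i|)) ?subrr // => i _.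
  by rewrite -mulr_sumr HP.2 mulr1.
move=> j; apply/eqP; rewrite -subr_eq0; apply/eqP.
by apply: (psumr_eq0P _ Hs) => // k _; rewrite subr_ge0.
Qed.

Lemma invariant_positive w k :
  (forall i, 0 <= w i) -> 0 < w k ->
  (forall j, \sum_(i < d) w i * P i j = w j) -> forall j, 0 < w j.
Proof.
move=> w0 wk Hw j; have [t Ht] := Hirr k j.
rewrite -(mpow_stationary Hw t j) (bigD1 k) //=.
apply: ltr_pwDl; first exact: mulr_gt0.
apply: sumr_ge0 => i _; apply: mulr_ge0 => //.
exact: (stochastic_mpow t HP).1.
Qed.

Lemma stationary_exists : (0 < d)%N ->
  exists mu : 'I_d -> R, [/\ (forall i, 0 < mu i), \sum_(i < d) mu i = 1 &
     (forall j, \sum_(i < d) mu i * P i j = mu j)].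
Proof.
move=> d0; have [u [[k uk] Hu]] := invariant_row_exists d0.
pose w i := `|u i|; have Hw := abs_invariant Hu.
have Hpos := @invariant_positive w k (fun i => normr_ge0 _) _ Hw.
have S0 : 0 < \sum_(i < d) w i.
  rewrite (bigD1 k) //=; apply: ltr_pwDl; first by rewrite normr_gt0.
  by apply: sumr_ge0 => i _; exact: normr_ge0.
exists (fun i => w i / \sum_(i < d) w i); split.
- by move=> j; apply: divr_gt0 => //; apply: Hpos; rewrite normr_gt0.
- by rewrite -mulr_suml mulfV // gt_eqF.
- move=> j; rewrite /w -[in RHS](Hw j) [RHS]mulr_suml; apply: eq_bigr => i _.
  by rewrite mulrAC.
Qed.

Section Gain.
Variables (mu f : 'I_d -> R).
Hypotheses (Hmu1 : \sum_(i < d) mu i = 1)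
           (Hmu : forall j, \sum_(i < d) mu i * P i j = mu j).

(* The matrix whose left kernel is trivial by the maximum principle and whose
   left action encodes the Poisson equation normalized by mu x = 0. *)
Let poisson_mx : 'M[R]_d := \matrix_(j, i) ((i == j)%:R - P i j + mu j).

Let poisson_mxE (x : 'rV[R]_d) i :
  (x *m poisson_mx) 0 i
  = x 0 i - \sum_(j < d) P i j * x 0 j + \sum_(j < d) mu j * x 0 j.
Proof.
rewrite mxE; under eq_bigr do rewrite mxE !mulrDr mulrN.
rewrite !big_split /= sumrN (bigD1 i) //= eqxx mulr1 big1 ?addr0; last first.
  by move=> j /negbTE; rewrite eq_sym => ->; rewrite mulr0.
by congr (_ - _ + _); apply: eq_bigr => j _; rewrite mulrC.
Qed.

(* A left kernel vector x is harmonic with zero mu-mean, hence zero. *)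
Let poisson_mx_inj (x : 'rV[R]_d) : x *m poisson_mx = 0 -> x = 0.
Proof.
move=> Hx; set c := \sum_(j < d) mu j * x 0 j.
have Hx' i : x 0 i - \sum_(j < d) P i j * x 0 j + c = 0.
  by rewrite -poisson_mxE Hx mxE.
have c0 : c = 0.
  have : \sum_(i < d) mu i * (x 0 i - \sum_(j < d) P i j * x 0 j + c) = 0.
    by apply: big1 => i _; rewrite Hx' mulr0.
  under eq_bigr do rewrite !mulrDr mulrN.
  by rewrite !big_split /= sumrN -mulr_suml Hmu1 mul1r stationary_mean // subrr add0r.
have Hh i : \sum_(j < d) P i j * x 0 j = x 0 i.
  by move: (Hx' i); rewrite c0 addr0 => /eqP; rewrite subr_eq0 => /eqP.
have Hc := harmonic_const HP Hirr Hh.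
apply/matrixP => a i; rewrite (ord1 a) mxE.
move: c0; rewrite /c (eq_bigr (fun j => mu j * x 0 i)) => [|j _]; last by rewrite (Hc j i).
by rewrite -mulr_suml Hmu1 mul1r.
Qed.

Lemma poisson_exists :
  exists g h, forall i, f i + \sum_(j < d) P i j * h j = g + h i.
Proof.
have uC := left_injective_unitmx poisson_mx_inj.
have [x Hx] : exists x, x *m poisson_mx = \row_i f i.
  by exists (\row_i f i *m invmx poisson_mx); rewrite -mulmxA mulVmx // mulmx1.
exists (\sum_(j < d) mu j * x 0 j), (fun i => x 0 i) => i.
move/matrixP: Hx => /(_ 0 i); rewrite poisson_mxE mxE => <-.
by rewrite addrAC subrK addrC.
Qed.

Lemma longrun_avg_stationary x : longrun_avg P f x = \sum_(i < d) mu i * f i.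
Proof.
have [g [h Hgh]] := poisson_exists.
rewrite (longrun_avg_poisson x HP Hgh).
have : \sum_(i < d) mu i * (f i + \sum_(j < d) P i j * h j)
       = \sum_(i < d) mu i * (g + h i) by apply: eq_bigr => i _; rewrite Hgh.
under eq_bigr do rewrite mulrDr.
under [in RHS]eq_bigr do rewrite mulrDr.
by rewrite !big_split /= -mulr_suml Hmu1 mul1r stationary_mean // => /addIr.
Qed.

End Gain.
End Stationary.

(* Irreducibility only depends on the support: if every positive entry of A
   is a positive entry of B, then so it is for all powers. *)
Lemma mpow_support A B :
  stochastic A -> stochastic B -> (forall i j, 0 < A i j -> 0 < B i j) ->
  forall t i j, 0 < mpow A t i j -> 0 < mpow B t i j.
Proof.
move=> HA HB Hsupp; elim=> [//|t IH] i j.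
rewrite /mpow /= -!/(mpow _ t) !mxE => Hpos.
have [k Hk] : exists k, 0 < A i k * mpow A t k j.
  apply/existsP; apply: contraLR Hpos => /existsPn Hn; rewrite -leNgt.
  by apply: sumr_le0 => k _; rewrite leNgt; exact: Hn.
have Ak : 0 < A i k.
  by rewrite lt_def HA.1 andbT; apply: contraTneq Hk => ->; rewrite mul0r ltxx.
have Atk : 0 < mpow A t k j.
  rewrite lt_def (stochastic_mpow t HA).1 andbT.
  by apply: contraTneq Hk => ->; rewrite mulr0 ltxx.
rewrite (bigD1 k) //=; apply: ltr_pwDl; first by rewrite mulr_gt0 ?Hsupp ?IH.
apply: sumr_ge0 => l _; apply: mulr_ge0; first exact: HB.1.
exact: (stochastic_mpow t HB).1.
Qed.

End MarkovChains.

Section AffineEventually.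
Variable R : realType.
Implicit Types (a b : R).

Lemma affine_pos_near a b (nu0 : R) :
  0 < a + nu0 * b -> \forall nu \near nu0, 0 < a + nu * b.
Proof.
move=> H.
have cv : a + nu * b @[nu --> nu0] --> a + nu0 * b.
  by apply: cvgD; [exact: cvg_cst|apply: cvgM; [exact: cvg_id|exact: cvg_cst]].
exact: (cvgr_gt _ cv _ H).
Qed.

Lemma affine_pos_pinfty a b : 0 < b -> \forall nu \near +oo, 0 < a + nu * b.
Proof.
move=> b0; near=> nu.
have : - a / b < nu by near: nu; apply: nbhs_pinfty_gt; exact: num_real.
by rewrite ltr_pdivrMr // => ?; lra.
Unshelve. all: by end_near.
Qed.

Lemma affine_pos_ninfty a b : b < 0 -> \forall nu \near -oo, 0 < a + nu * b.
Proof.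
move=> b0; near=> nu.
have : nu < a / - b by near: nu; apply: nbhs_ninfty_lt; exact: num_real.
by rewrite ltr_pdivlMr ?oppr_gt0 // => ?; lra.
Unshelve. all: by end_near.
Qed.

End AffineEventually.

Section SubsidyProblem.
Variables (R : realType) (d : nat) (P0 P1 : 'M[R]_d) (R0 R1 : 'I_d -> R).
Hypotheses (HP0 : stochastic P0) (HP1 : stochastic P1)
  (Huni : unichain P0 P1) (d0 : (0 < d)%N).
Implicit Types (pi : 'I_d -> bool) (pol mu h : 'I_d -> R) (nu : R).

Definition act_mx (a : bool) : 'M[R]_d := if a then P1 else P0.
Definition subsidy_reward nu (a : bool) (i : 'I_d) : R :=
  if a then R1 i else R0 i + nu.
Definition qvalue h nu (i : 'I_d) (a : bool) : R :=
  subsidy_reward nu a i + \sum_(j < d) act_mx a i j * h j.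

(* under unichain the gain does not depend on the initial state; we fix one *)
Definition state0 : 'I_d := Ordinal d0.
Definition gain nu pi : R := subsidy_gain P0 P1 R0 R1 nu pi state0.

Lemma polP_bool pi i j : polP P0 P1 (bool_pol R pi) i j = act_mx (pi i) i j.
Proof. by rewrite mxE /bool_pol /act_mx; case: (pi i) => /=; ring. Qed.

Lemma polR_bool nu pi i :
  polR (fun i => R0 i + nu) R1 (bool_pol R pi) i = subsidy_reward nu (pi i) i.
Proof. by rewrite /polR /bool_pol /subsidy_reward; case: (pi i) => /=; ring. Qed.

Lemma valid_bool pi : valid_pol (bool_pol R pi).
Proof. by move=> i; rewrite /bool_pol; case: (pi i); rewrite /= ?ler01 ?lexx. Qed.

Lemma stochastic_polP pol : valid_pol pol -> stochastic (polP P0 P1 pol).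
Proof.
move=> Hv; split=> [i j|i].
  have /andP [h0 h1] := Hv i.
  by rewrite mxE addr_ge0 // mulr_ge0 ?subr_ge0 ?HP1.1 ?HP0.1.
under eq_bigr do rewrite mxE.
by rewrite big_split /= -!mulr_sumr HP1.2 HP0.2; ring.
Qed.

(* A randomized policy has at least the support of the deterministic policy
   "activate where pol > 0", hence unichain makes it irreducible. *)
Lemma irreducible_polP pol : valid_pol pol -> irreducible (polP P0 P1 pol).
Proof.
move=> Hv; pose pi i := (0 < pol i).
have Hsupp i j :
    0 < polP P0 P1 (bool_pol R pi) i j -> 0 < polP P0 P1 pol i j.
  rewrite polP_bool mxE /act_mx /pi; have /andP [h0 h1] := Hv i.
  case: (boolP (0 < pol i)) => Hp /= H.
    apply: ltr_pwDl; first exact: mulr_gt0 Hp H.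
    by rewrite mulr_ge0 ?subr_ge0 ?HP0.1.
  have -> : pol i = 0 by apply/le_anti; rewrite h0 andbT leNgt.
  by rewrite mul0r add0r subr0 mul1r.
move=> i j; have [t Ht] := Huni pi i j; exists t.
exact: (mpow_support (stochastic_polP (valid_bool pi)) (stochastic_polP Hv) Hsupp).
Qed.

Lemma policy_stationary pol : valid_pol pol -> exists mu : 'I_d -> R,
  [/\ (forall i, 0 < mu i), \sum_(i < d) mu i = 1 &
     (forall j, \sum_(i < d) mu i * polP P0 P1 pol i j = mu j)].
Proof.
by move=> Hv; apply: stationary_exists (stochastic_polP Hv) (irreducible_polP Hv) d0.
Qed.

Lemma policy_longrun_avg pol mu : valid_pol pol -> \sum_(i < d) mu i = 1 ->
  (forall j, \sum_(i < d) mu i * polP P0 P1 pol i j = mu j) ->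
  forall f x, longrun_avg (polP P0 P1 pol) f x = \sum_(i < d) mu i * f i.
Proof.
move=> Hv H1 H2 f x.
by rewrite (longrun_avg_stationary (stochastic_polP Hv) (irreducible_polP Hv) f H1 H2).
Qed.

Lemma subsidy_gain_stationary nu pi mu : \sum_(i < d) mu i = 1 ->
  (forall j, \sum_(i < d) mu i * polP P0 P1 (bool_pol R pi) i j = mu j) ->
  forall x, subsidy_gain P0 P1 R0 R1 nu pi x
            = \sum_(i < d) mu i * subsidy_reward nu (pi i) i.
Proof.
move=> H1 H2 x; rewrite /subsidy_gain (policy_longrun_avg (valid_bool pi) H1 H2).
by apply: eq_bigr => i _; rewrite polR_bool.
Qed.

Lemma subsidy_gainE nu pi x : subsidy_gain P0 P1 R0 R1 nu pi x = gain nu pi.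
Proof.
have [mu [_ H1 H2]] := policy_stationary (valid_bool pi).
by rewrite /gain !(subsidy_gain_stationary _ H1 H2).
Qed.

Lemma optimalP nu pi :
  subsidy_optimal P0 P1 R0 R1 nu pi <-> forall pi', gain nu pi' <= gain nu pi.
Proof. by split=> H pi' => [|x]; rewrite ?subsidy_gainE; apply: H. Qed.

(* Policies as finite functions, to range over the finite policy space. *)
Lemma gain_ffun nu pi : gain nu [ffun j => pi j] = gain nu pi.
Proof. by congr (gain nu); apply/funext => j; rewrite ffunE. Qed.

Lemma optimal_ffun nu pi :
  (forall f : {ffun 'I_d -> bool}, gain nu f <= gain nu pi) ->
  subsidy_optimal P0 P1 R0 R1 nu pi.
Proof. by move=> H; apply/optimalP => pi'; rewrite -gain_ffun. Qed.

(* The policy space is finite, so an optimal policy exists. *)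
Lemma exists_optimal nu : exists pi, subsidy_optimal P0 P1 R0 R1 nu pi.
Proof.
have [f _ Hf] := @arg_maxP _ _ {ffun 'I_d -> bool} [ffun=> false] xpredT
                   (gain nu) isT.
by exists f; apply: optimal_ffun => f'; exact: Hf.
Qed.

Lemma gain_affine pi : exists mu : 'I_d -> R,
  [/\ (forall i, 0 < mu i), \sum_(i < d) mu i = 1 &
   forall nu, gain nu pi = \sum_(i < d) mu i * subsidy_reward 0 (pi i) i
                           + nu * \sum_(i < d) mu i * (~~ pi i)%:R].
Proof.
have [mu [Hp H1 H2]] := policy_stationary (valid_bool pi).
exists mu; split => // nu; rewrite /gain (subsidy_gain_stationary _ H1 H2).
rewrite mulr_sumr -big_split /=; apply: eq_bigr => i _.
by rewrite /subsidy_reward; case: (pi i) => /=; ring.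
Qed.

Lemma gain_qvalue pi mu h nu : \sum_(i < d) mu i = 1 ->
  (forall j, \sum_(i < d) mu i * polP P0 P1 (bool_pol R pi) i j = mu j) ->
  gain nu pi = \sum_(i < d) mu i * qvalue h nu i (pi i) - \sum_(i < d) mu i * h i.
Proof.
move=> H1 H2; rewrite /gain (subsidy_gain_stationary _ H1 H2) /qvalue.
under [in RHS]eq_bigr do rewrite mulrDr.
rewrite big_split /=.
have -> : \sum_(i < d) mu i * \sum_(j < d) act_mx (pi i) i j * h j
        = \sum_(i < d) mu i * \sum_(j < d) polP P0 P1 (bool_pol R pi) i j * h j.
  by apply: eq_bigr => i _; congr (_ * _); apply: eq_bigr => j _; rewrite polP_bool.
by rewrite stationary_mean // addrK.
Qed.

Lemma gain_improvement pi g h nu i1 :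
  (forall i, g + h i <= qvalue h nu i (pi i)) ->
  g + h i1 < qvalue h nu i1 (pi i1) -> g < gain nu pi.
Proof.
move=> Hge Hgt; have [mu [Hmp Hm1 Hms]] := policy_stationary (valid_bool pi).
rewrite (gain_qvalue h nu Hm1 Hms) ltrBrDr.
have -> : g + \sum_(i < d) mu i * h i = \sum_(i < d) mu i * (g + h i).
  under [in RHS]eq_bigr do rewrite mulrDr.
  by rewrite big_split /= -mulr_suml Hm1 mul1r.
rewrite [X in X < _](bigD1 i1) //= [X in _ < X](bigD1 i1) //=.
by apply: ltr_leD; [rewrite ltr_pM2l|apply: ler_sum => i _; rewrite ler_pM2l].
Qed.

Lemma bellman nu pis : subsidy_optimal P0 P1 R0 R1 nu pis ->
  exists g h, [/\ (forall i a, qvalue h nu i a <= g + h i),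
                  (forall i, qvalue h nu i (pis i) = g + h i) & gain nu pis = g].
Proof.
move=> Hopt.
have [mu [Hmp Hm1 Hms]] := policy_stationary (valid_bool pis).
have [g [h Hgh]] := poisson_exists (stochastic_polP (valid_bool pis))
  (irreducible_polP (valid_bool pis)) (fun i => subsidy_reward nu (pis i) i) Hm1 Hms.
have HQ i : qvalue h nu i (pis i) = g + h i.
  rewrite /qvalue -Hgh; congr (_ + _); apply: eq_bigr => j _.
  by rewrite polP_bool.
have HG : gain nu pis = g.
  rewrite (gain_qvalue h nu Hm1 Hms); under eq_bigr do rewrite HQ mulrDr.
  by rewrite big_split /= -mulr_suml Hm1 mul1r addrK.
exists g, h; split => // i1 a1; rewrite leNgt; apply/negP => Hlt.
pose pi' i := if i == i1 then a1 else pis i.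
have Hge i : g + h i <= qvalue h nu i (pi' i).
  by rewrite /pi'; case: eqP => [->|_]; [exact: ltW|rewrite HQ].
have Hi1 : g + h i1 < qvalue h nu i1 (pi' i1) by rewrite /pi' eqxx.
by have := gain_improvement Hge Hi1; rewrite -HG ltNge (proj1 (optimalP nu pis) Hopt).
Qed.

(* Every optimal policy is conserving: it attains the maximum in the
   optimality equation in every state (all states are recurrent). *)
Lemma optimal_conserving nu pis g h pi :
  (forall i a, qvalue h nu i a <= g + h i) -> gain nu pis = g ->
  subsidy_optimal P0 P1 R0 R1 nu pis ->
  subsidy_optimal P0 P1 R0 R1 nu pi -> forall i, qvalue h nu i (pi i) = g + h i.
Proof.
move=> HQ HG Hopt Hpi.
have Heq : gain nu pi = g.
  by apply/le_anti; rewrite -HG (proj1 (optimalP _ _) Hopt) (proj1 (optimalP _ _) Hpi).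
have [mu [Hmp Hm1 Hms]] := policy_stationary (valid_bool pi).
have Hs : \sum_(i < d) mu i * (g + h i - qvalue h nu i (pi i)) = 0.
  under eq_bigr do rewrite !mulrDr mulrN.
  rewrite !big_split /= sumrN -mulr_suml Hm1 mul1r.
  by rewrite -{1}Heq (gain_qvalue h nu Hm1 Hms); ring.
have Hnn i : true -> 0 <= mu i * (g + h i - qvalue h nu i (pi i)).
  by move=> _; rewrite mulr_ge0 ?subr_ge0 ?HQ ?ltW.
move=> i; have /eqP := @psumr_eq0P _ _ _ _ Hnn Hs i isT.
by rewrite mulf_eq0 (gt_eqF (Hmp i)) /= subr_eq0 => /eqP ->.
Qed.

Lemma polP_qvalue h nu pol i :
  polR (fun i => R0 i + nu) R1 pol i + \sum_(j < d) polP P0 P1 pol i j * h j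
  = pol i * qvalue h nu i true + (1 - pol i) * qvalue h nu i false.
Proof.
rewrite /polR /qvalue /subsidy_reward /act_mx.
under eq_bigr do rewrite mxE mulrDl -!mulrA.
by rewrite big_split /= -!mulr_sumr; ring.
Qed.

Section Duality.
Variables (nu g : R) (h pol mu : 'I_d -> R).
Hypotheses (HQ : forall i a, qvalue h nu i a <= g + h i) (Hv : valid_pol pol)
  (Hm1 : \sum_(i < d) mu i = 1) (Hm0 : forall i, 0 <= mu i)
  (Hms : forall j, \sum_(i < d) mu i * polP P0 P1 pol i j = mu j).

Let mixed_qvalueE :
  \sum_(i < d) mu i * polR (fun i => R0 i + nu) R1 pol i
  = \sum_(i < d) mu i * (pol i * qvalue h nu i true + (1 - pol i) * qvalue h nu i false)
    - \sum_(j < d) mu j * h j.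
Proof.
rewrite -(stationary_mean h Hms) -sumrB; apply: eq_bigr => i _.
by rewrite -polP_qvalue; ring.
Qed.

Let mean_gh : \sum_(i < d) mu i * (g + h i) = g + \sum_(i < d) mu i * h i.
Proof. by under eq_bigr do rewrite mulrDr; rewrite big_split /= -mulr_suml Hm1 mul1r. Qed.

Lemma duality_bound : \sum_(i < d) mu i * polR (fun i => R0 i + nu) R1 pol i <= g.
Proof.
rewrite mixed_qvalueE lerBlDr -mean_gh; apply: ler_sum => i _.
apply: ler_wpM2l => //; have /andP [h0 h1] := Hv i.
have -> : g + h i = pol i * (g + h i) + (1 - pol i) * (g + h i) by ring.
by apply: lerD; apply: ler_wpM2l; rewrite ?subr_ge0.
Qed.

Lemma duality_eq :
  (forall i, (pol i != 0 -> qvalue h nu i true = g + h i) /\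
             (pol i != 1 -> qvalue h nu i false = g + h i)) ->
  \sum_(i < d) mu i * polR (fun i => R0 i + nu) R1 pol i = g.
Proof.
move=> Hc; rewrite mixed_qvalueE; apply/eqP; rewrite subr_eq -mean_gh.
apply/eqP/eq_bigr => i _; congr (_ * _); have [Ht Hf] := Hc i.
have [/eqP Hp0|p0] := boolP (pol i == 0).
  by rewrite Hf ?Hp0 ?subr0 ?mul0r ?mul1r ?add0r // eq_sym oner_eq0.
have [/eqP Hp1|p1] := boolP (pol i == 1).
  by rewrite Ht ?Hp1 ?subrr ?mul0r ?mul1r ?addr0 // oner_eq0.
by rewrite Ht // Hf //; ring.
Qed.

End Duality.

Lemma weighted_mass_gt0 mu (p : pred 'I_d) j :
  (forall i, 0 < mu i) -> p j -> 0 < \sum_(i < d) mu i * (p i)%:R.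
Proof.
move=> Hp pj; rewrite (bigD1 j) //= pj mulr1; apply: ltr_pwDl => //.
by apply: sumr_ge0 => i _; rewrite mulr_ge0 ?ler0n ?ltW.
Qed.

Lemma passive_mass_lt1 mu pi j :
  (forall i, 0 < mu i) -> \sum_(i < d) mu i = 1 -> pi j ->
  \sum_(i < d) mu i * (~~ pi i)%:R < 1.
Proof.
move=> Hp H1 pj; have := weighted_mass_gt0 Hp pj.
have <- : \sum_(i < d) mu i - \sum_(i < d) mu i * (~~ pi i)%:R
          = \sum_(i < d) mu i * (pi i)%:R.
  by rewrite -sumrB; apply: eq_bigr => i _; case: (pi i) => /=; ring.
by rewrite H1 subr_gt0.
Qed.

Lemma eventually_passive_optimal pi :
  \forall nu \near +oo, gain nu pi <= gain nu (fun _ => false).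
Proof.
have [mu [Hp H1 HG]] := gain_affine pi.
have [mu0 [_ H10 HG0]] := gain_affine (fun _ => false).
have [[j pj]|Hn] := pselect (exists j, pi j); last first.
  have -> : pi = (fun _ => false).
    by apply/funext => j; apply/negP => pj; apply: Hn; exists j.
  exact: nearW.
have b1 : 0 < 1 - \sum_(i < d) mu i * (~~ pi i)%:R.
  by rewrite subr_gt0; exact: passive_mass_lt1 Hp H1 pj.
have slope0 : \sum_(i < d) mu0 i * (~~ false)%:R = 1.
  by rewrite -[RHS]H10; apply: eq_bigr => i _; rewrite mulr1.
pose a := \sum_(i < d) mu i * subsidy_reward 0 (pi i) i.
pose a0 := \sum_(i < d) mu0 i * subsidy_reward 0 false i.
near=> nu; rewrite HG HG0 slope0 mulr1 -/a -/a0 -subr_ge0 ltW //.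
near: nu; apply: filterS (affine_pos_pinfty (a0 - a) b1) => nu.
by congr (0 < _); ring.
Unshelve. all: by end_near.
Qed.

Lemma eventually_active_better pi : (exists j, ~~ pi j) ->
  \forall nu \near -oo, gain nu pi < gain nu (fun _ => true).
Proof.
move=> [j pj]; have [mu [Hp H1 HG]] := gain_affine pi.
have [mu1 [_ _ HG1]] := gain_affine (fun _ => true).
have b0 := weighted_mass_gt0 (p := fun i => ~~ pi i) Hp pj.
rewrite -oppr_lt0 in b0.
have slope1 : \sum_(i < d) mu1 i * (~~ true)%:R = 0.
  by apply: big1 => i _; rewrite mulr0.
pose a := \sum_(i < d) mu i * subsidy_reward 0 (pi i) i.
pose a1 := \sum_(i < d) mu1 i * subsidy_reward 0 true i.
near=> nu; rewrite HG HG1 slope1 mulr0 addr0 -/a -/a1 -subr_gt0.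
near: nu; apply: filterS (affine_pos_ninfty (a1 - a) b0) => nu.
by congr (0 < _); ring.
Unshelve. all: by end_near.
Qed.

(* Hence every omega(nu) contains i for large nu, and for very negative nu
   no optimal policy rests in i: the index nu_i is a finite infimum. *)
Lemma omega_nonempty i : exists nu, omega P0 P1 R0 R1 nu i.
Proof.
have Hev : \forall nu \near +oo, forall f : {ffun 'I_d -> bool},
    gain nu f <= gain nu (fun _ => false).
  by apply: filter_forall => f; exact: eventually_passive_optimal.
have [nu Hnu] := filter_ex Hev.
by exists nu, (fun _ => false); split => //; apply: optimal_ffun.
Qed.

Lemma omega_lower_bound i : exists L, forall nu, omega P0 P1 R0 R1 nu i -> L <= nu.
Proof.
have [M [_ HM]] : \forall nu \near -oo, forall f : {ffun 'I_d -> bool},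
    (exists j, ~~ f j) -> gain nu f < gain nu (fun _ => true).
  apply: filter_forall => f; have [Hj|Hn] := pselect (exists j, ~~ f j).
    by apply: filterS (eventually_active_better Hj) => nu ? _.
  by apply: nearW => nu /Hn.
exists M => nu [pi [Hopt Hpi]]; rewrite leNgt; apply/negP => Hlt.
have := HM nu Hlt [ffun j => pi j]; rewrite gain_ffun.
have Hpas : exists j, ~~ [ffun j => pi j] j by exists i; rewrite ffunE Hpi.
by move=> /(_ Hpas); rewrite ltNge (proj1 (optimalP _ _) Hopt).
Qed.

Lemma not_omega_below_index nu i :
  nu < whittle_index P0 P1 R0 R1 i -> ~ omega P0 P1 R0 R1 nu i.
Proof.
move=> Hlt Hom.
have Hlb : has_lbound [set nu | omega P0 P1 R0 R1 nu i].
  by have [L HL] := omega_lower_bound i; exists L => y; exact: HL.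
by have := ge_inf Hlb Hom; rewrite leNgt Hlt.
Qed.

Lemma omega_above_index nu i : indexable P0 P1 R0 R1 ->
  whittle_index P0 P1 R0 R1 i < nu -> omega P0 P1 R0 R1 nu i.
Proof.
move=> Hind Hlt.
have Hne : [set nu | omega P0 P1 R0 R1 nu i] !=set0 by exact: omega_nonempty.
have [y Hy Hyn] := inf_lt Hne Hlt.
exact: (Hind y nu (ltW Hyn) i Hy).
Qed.

(* The set of subsidies at which action b is optimal in state s is closed. *)
Lemma optimal_action_closed nu0 s b :
  ~ (exists pi, subsidy_optimal P0 P1 R0 R1 nu0 pi /\ pi s = b) ->
  \forall nu \near nu0, ~ exists pi, subsidy_optimal P0 P1 R0 R1 nu pi /\ pi s = b.
Proof.
move=> Hno; have [pis Hopt] := exists_optimal nu0.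
have Hev : \forall nu \near nu0, forall f : {ffun 'I_d -> bool},
    f s = b -> gain nu f < gain nu pis.
  apply: (@filter_forall _ _ _ _ (nbhs_filter nu0)) => f.
  have [Hfs|Hfs] := eqVneq (f s) b; last first.
    by apply: nearW => nu Hf; move: Hfs; rewrite Hf eqxx.
  have Hlt0 : 0 < gain nu0 pis - gain nu0 f.
    rewrite subr_gt0 ltNge; apply/negP => Hle; apply: Hno; exists f; split => //.
    by apply/optimalP => pi'; exact: le_trans (proj1 (optimalP _ _) Hopt pi') Hle.
  have [mu [_ _ HGf]] := gain_affine f; have [mu' [_ _ HGp]] := gain_affine pis.
  pose A := \sum_(i < d) mu' i * subsidy_reward 0 (pis i) i
            - \sum_(i < d) mu i * subsidy_reward 0 (f i) i.
  pose B := \sum_(i < d) mu' i * (~~ pis i)%:R - \sum_(i < d) mu i * (~~ f i)%:R.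
  have HD nu : gain nu pis - gain nu f = A + nu * B by rewrite HGf HGp /A /B; ring.
  rewrite HD in Hlt0; apply: filterS (affine_pos_near Hlt0) => nu.
  by rewrite -HD subr_gt0.
apply: filterS Hev => nu Hlt [pi [Hpi Hs]].
have := Hlt [ffun j => pi j]; rewrite ffunE gain_ffun => /(_ Hs).
by rewrite ltNge (proj1 (optimalP _ _) Hpi).
Qed.

Lemma near_both_sides (nu0 : R) (Q : R -> Prop) :
  (\forall nu \near nu0, Q nu) -> exists2 e, 0 < e & Q (nu0 - e) /\ Q (nu0 + e).
Proof.
move=> /(nbhs_ballP nu0 _).1 [e e0 He]; exists (e / 2); first by rewrite divr_gt0.
have e2 : `|e / 2| < e.
  by rewrite ger0_norm ?divr_ge0 ?ler0n ?ltW // ltr_pdivrMr // ltr_pMr // ltr1n.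
split; apply: He; rewrite -ball_normE /=.
  by rewrite (_ : nu0 - (nu0 - e / 2) = e / 2) //; ring.
by rewrite (_ : nu0 - (nu0 + e / 2) = - (e / 2)) ?normrN //; ring.
Qed.

Section AtIndex.
Hypotheses (Hind : indexable P0 P1 R0 R1)
  (Hord : forall i j : 'I_d, (i < j)%N ->
     whittle_index P0 P1 R0 R1 j < whittle_index P0 P1 R0 R1 i).
Variable s : 'I_d.
Let nu_s := whittle_index P0 P1 R0 R1 s.

Lemma both_actions_optimal_at_index b :
  exists pi, subsidy_optimal P0 P1 R0 R1 nu_s pi /\ pi s = b.
Proof.
have [//|Hno] := pselect (exists pi, subsidy_optimal P0 P1 R0 R1 nu_s pi /\ pi s = b).
have [e e0 [Hleft Hright]] := near_both_sides (optimal_action_closed Hno).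
exfalso; case: b {Hno} Hleft Hright => Hleft Hright.
- have [pi Hpi] := exists_optimal (nu_s - e); apply: Hleft; exists pi; split => //.
  have Hn : ~ omega P0 P1 R0 R1 (nu_s - e) s.
    by apply: not_omega_below_index; rewrite /nu_s ltrBlDr ltrDl.
  by apply: contra_notT Hn => /negbTE Hs; exists pi.
- have [|pi [Hpi Hs]] := @omega_above_index (nu_s + e) s Hind.
    by rewrite /nu_s ltrDl.
  by apply: Hright; exists pi.
Qed.

Lemma bellman_at_index : exists g h,
  [/\ (forall i a, qvalue h nu_s i a <= g + h i),
      (forall i : 'I_d, (i <= s)%N -> qvalue h nu_s i true = g + h i) &
      (forall i : 'I_d, (s <= i)%N -> qvalue h nu_s i false = g + h i)].
Proof.
have [pis Hopt] := exists_optimal nu_s.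
have [g [h [HQ Hc HG]]] := bellman Hopt.
have Hcons := optimal_conserving HQ HG Hopt.
have at_s b : qvalue h nu_s s b = g + h s.
  by have [pi [Hpi <-]] := both_actions_optimal_at_index b; apply: Hcons.
exists g, h; split => // i; rewrite leq_eqVlt => /orP [/eqP/val_inj Heq| Hi].
- by rewrite Heq.
- have Hn : ~ omega P0 P1 R0 R1 nu_s i by apply: not_omega_below_index; exact: Hord Hi.
  have <- : pis i = true by apply: contra_notT Hn => /negbTE Hpi; exists pis.
  exact: Hc.
- by rewrite -Heq.
- have [pi [Hpi <-]] : omega P0 P1 R0 R1 nu_s i by apply: omega_above_index => //; exact: Hord Hi.
  exact: Hcons.
Qed.

End AtIndex.
End SubsidyProblem.

Section Zones.
Variables (R : realType) (d : nat).

Lemma sum_le_split (s : 'I_d) (F : 'I_d -> R) :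
  \sum_(i < d | (i <= s)%N) F i = \sum_(i < d | (i < s)%N) F i + F s.
Proof.
rewrite (bigID (fun i : 'I_d => (i < s)%N)) /=; congr (_ + _).
  by apply: eq_bigl => i; rewrite andb_idl // => /ltnW.
by apply: big_pred1 => i /=; rewrite -leqNgt -eqn_leq.
Qed.

Lemma sum_zone_split (s : 'I_d) (F : 'I_d -> R) :
  \sum_(i < d) F i
  = \sum_(i < d | (i < s)%N) F i + F s + \sum_(i < d | (s < i)%N) F i.
Proof.
rewrite (bigID (fun i : 'I_d => (i <= s)%N)) /= sum_le_split; congr (_ + _).
by apply: eq_bigl => i; rewrite ltnNge.
Qed.

Lemma s_of_spec (alpha : R) (m : 'I_d -> R) :
  simplex m -> 0 <= alpha -> alpha < 1 ->
  exists s, [/\ s_of alpha m = Some s,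
     \sum_(i < d | (i < s)%N) m i <= alpha & alpha < \sum_(i < d | (i <= s)%N) m i].
Proof.
move=> [Hm0 Hm1] a0 a1.
have d0 : (0 < d)%N.
  rewrite lt0n; apply/eqP => Hd; move: Hm1; rewrite big1 => [/eqP|i _].
    by rewrite eq_sym oner_eq0.
  by move: (ltn_ord i); rewrite {2}Hd.
pose Pn n := (n < d)%N && (alpha < \sum_(i < d | (i <= n)%N) m i).
have exP : exists n, Pn n.
  exists d.-1; rewrite /Pn ltn_predL d0 (eq_bigl xpredT) ?Hm1 // => i /=.
  by rewrite -ltnS (prednK d0) ltn_ord.
have [n /andP [nd Hn] Hmin] := ex_minnP exP.
have Hlo : \sum_(i < d | (i < n)%N) m i <= alpha.
  case: n nd Hn Hmin => [|k] nd Hn Hmin.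
    by rewrite big_pred0 // => i; rewrite ltn0.
  rewrite leNgt; apply/negP => Hk.
  by have := Hmin k; rewrite /Pn (ltnW nd) Hk => /(_ isT); rewrite ltnn.
rewrite /s_of; case: pickP => [s' /andP [H1 H2]|Hnone]; first by exists s'.
by have := Hnone (Ordinal nd); rewrite /= Hlo Hn.
Qed.

End Zones.

Section ThresholdPolicy.
Variables (R : realType) (d : nat) (alpha : R) (m : 'I_d -> R) (s : 'I_d).
Hypotheses (Hs : s_of alpha m = Some s)
  (Hlo : \sum_(i < d | (i < s)%N) m i <= alpha)
  (Hhi : alpha < \sum_(i < d | (i <= s)%N) m i).

Let below := \sum_(i < d | (i < s)%N) m i.

(* The randomized threshold policy of zone s: always active in the states of
   higher index, active in s with the probability that makes the active mass
   exactly alpha, passive in the states of lower index. *)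
Definition threshold_pol : 'I_d -> R :=
  fun i => if (i < s)%N then 1 else if i == s then (alpha - below) / m s else 0.

(* state s carries mass, since the partial sums jump over alpha there *)
Let ms_gt0 : 0 < m s.
Proof. by move: Hlo Hhi; rewrite sum_le_split -/below; lra. Qed.

Lemma threshold_valid : valid_pol threshold_pol.
Proof.
move=> i; rewrite /threshold_pol; case: ifP => _; first by rewrite ler01 lexx.
case: ifP => _; last by rewrite lexx ler01.
apply/andP; split; first by rewrite divr_ge0 ?subr_ge0 // ltW.
by rewrite ler_pdivrMr // mul1r; move: Hhi; rewrite sum_le_split -/below; lra.
Qed.

Lemma threshold_mean (X Y : 'I_d -> R) :
  \sum_(i < d) m i * (threshold_pol i * X i + (1 - threshold_pol i) * Y i)
  = \sum_(i < d | (i < s)%N) m i * X i + (alpha - below) * X s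
    + (\sum_(i < d | (i <= s)%N) m i - alpha) * Y s
    + \sum_(i < d | (s < i)%N) m i * Y i.
Proof.
rewrite (sum_zone_split s) sum_le_split -/below.
have -> : \sum_(i < d | (i < s)%N)
    m i * (threshold_pol i * X i + (1 - threshold_pol i) * Y i)
    = \sum_(i < d | (i < s)%N) m i * X i.
  by apply: eq_bigr => i Hi; rewrite /threshold_pol Hi subrr mul0r addr0 mul1r.
have -> : \sum_(i < d | (s < i)%N)
    m i * (threshold_pol i * X i + (1 - threshold_pol i) * Y i)
    = \sum_(i < d | (s < i)%N) m i * Y i.
  apply: eq_bigr => i Hi; rewrite /threshold_pol ltnNge (ltnW Hi) /=.
  by rewrite ifN ?mul0r ?add0r ?subr0 ?mul1r // neq_ltn Hi orbT.
have Hms : m s * ((alpha - below) / m s) = alpha - below.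
  by rewrite mulrCA mulfV ?gt_eqF // mulr1.
rewrite /threshold_pol ltnn eqxx.
transitivity (\sum_(i < d | (i < s)%N) m i * X i
  + (m s * ((alpha - below) / m s)) * X s
  + (m s - m s * ((alpha - below) / m s)) * Y s
  + \sum_(i < d | (s < i)%N) m i * Y i); first by ring.
by rewrite Hms; ring.
Qed.

Lemma threshold_stationary (P0 P1 : 'M[R]_d) : phi P0 P1 alpha m = m ->
  forall j, \sum_(i < d) m i * polP P0 P1 threshold_pol i j = m j.
Proof.
move=> Hfix j; under eq_bigr do rewrite mxE.
by rewrite threshold_mean; have := congr1 (fun f => f j) Hfix; rewrite /phi Hs.
Qed.

Lemma threshold_activation : \sum_(i < d) m i * threshold_pol i = alpha.
Proof.
have := threshold_mean (fun _ => 1) (fun _ => 0).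
rewrite (eq_bigr (fun i => m i * threshold_pol i)) => [->|i _]; last by ring.
have -> : \sum_(i < d | (s < i)%N) m i * 0 = 0 by apply: big1 => i _; rewrite mulr0.
have -> : \sum_(i < d | (i < s)%N) m i * 1 = below.
  by apply: eq_bigr => i _; rewrite mulr1.
by rewrite sum_le_split -/below; ring.
Qed.

Lemma threshold_reward (R0 R1 : 'I_d -> R) :
  rho_formula R0 R1 alpha m = \sum_(i < d) m i * polR R0 R1 threshold_pol i.
Proof. by rewrite /polR threshold_mean /rho_formula Hs. Qed.

Lemma threshold_active_support i : threshold_pol i != 0 -> (i <= s)%N.
Proof.
rewrite leqNgt; apply: contra => Hsi.
by rewrite /threshold_pol ltnNge (ltnW Hsi) /= ifN // neq_ltn Hsi orbT.
Qed.

Lemma threshold_passive_support i : threshold_pol i != 1 -> (s <= i)%N.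
Proof. by rewrite /threshold_pol leqNgt; case: ltnP => //; rewrite eqxx. Qed.

End ThresholdPolicy.

Lemma sup_attained (R : realType) (E : set R) (x : R) :
  E x -> ubound E x -> sup E = x.
Proof.
move=> Ex ubx; apply/le_anti; rewrite ge_sup //=; last by exists x.
by apply: sup_upper_bound => //; split; exists x.
Qed.

Definition relaxed_gains (R : realType) (d : nat) (P0 P1 : 'M[R]_d)
  (R0 R1 : 'I_d -> R) (alpha : R) : set R :=
  [set g : R | exists (pol : 'I_d -> R) (x : 'I_d),
    [/\ valid_pol pol,
        (forall y, longrun_avg (polP P0 P1 pol) pol y = alpha) &
        g = longrun_avg (polP P0 P1 pol) (polR R0 R1 pol) x]].

Lemma VrelE (R : realType) (d : nat) (P0 P1 : 'M[R]_d) (R0 R1 : 'I_d -> R) alpha :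
  Vrel P0 P1 R0 R1 alpha = sup (relaxed_gains P0 P1 R0 R1 alpha).
Proof. by []. Qed.

Section RelaxedValue.
Variables (R : realType) (d : nat) (P0 P1 : 'M[R]_d) (R0 R1 : 'I_d -> R) (alpha : R).
Hypotheses (HP0 : stochastic P0) (HP1 : stochastic P1)
  (Huni : unichain P0 P1) (d0 : (0 < d)%N).

Lemma subsidized_mean nu (pol mu : 'I_d -> R) :
  \sum_(i < d) mu i * polR (fun i => R0 i + nu) R1 pol i
  = \sum_(i < d) mu i * polR R0 R1 pol i
    + nu * (\sum_(i < d) mu i - \sum_(i < d) mu i * pol i).
Proof.
rewrite mulrBr !mulr_sumr -sumrB -big_split /=.
by apply: eq_bigr => i _; rewrite /polR; ring.
Qed.

Lemma relaxed_gains_bound nu g h :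
  (forall i a, qvalue P0 P1 R0 R1 h nu i a <= g + h i) ->
  ubound (relaxed_gains P0 P1 R0 R1 alpha) (g - nu * (1 - alpha)).
Proof.
move=> HQ v [pol [x [Hv Hact ->]]].
have [mu [Hmp Hm1 Hms]] := policy_stationary HP0 HP1 Huni d0 Hv.
have Hmean := policy_longrun_avg HP0 HP1 Huni Hv Hm1 Hms.
have := Hact x; rewrite Hmean => Ha; rewrite Hmean.
have := duality_bound HQ Hv Hm1 (fun i => ltW (Hmp i)) Hms.
by rewrite subsidized_mean Hm1 Ha; lra.
Qed.

End RelaxedValue.

Lemma rho_fixed_point_relaxed_value (R : realType) (d : nat)
  (P0 P1 : 'M[R]_d) (R0 R1 : 'I_d -> R) (alpha : R) :
  stochastic P0 -> stochastic P1 -> 0 < alpha < 1 -> unichain P0 P1 ->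
  indexable P0 P1 R0 R1 ->
  (forall i j : 'I_d, (i < j)%N ->
     whittle_index P0 P1 R0 R1 j < whittle_index P0 P1 R0 R1 i) ->
  forall m, simplex m -> phi P0 P1 alpha m = m ->
  rho_formula R0 R1 alpha m = Vrel P0 P1 R0 R1 alpha.
Proof.
move=> HP0 HP1 /andP [a0 a1] Huni Hind Hord m Hm Hfix.
have [s [Hs Hlo Hhi]] := s_of_spec Hm (ltW a0) a1.
have d0 : (0 < d)%N by apply: leq_ltn_trans (ltn_ord s).
pose pol := threshold_pol alpha m s.
have Hv : valid_pol pol := threshold_valid Hlo Hhi.
have Hstat := threshold_stationary Hs Hlo Hhi Hfix.
have Hmean := policy_longrun_avg HP0 HP1 Huni Hv Hm.2 Hstat.
have [g [h [HQ Hact Hpas]]] := bellman_at_index HP0 HP1 Huni d0 Hind Hord s.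
have Hg : rho_formula R0 R1 alpha m
          + whittle_index P0 P1 R0 R1 s * (1 - alpha) = g.
  have -> : 1 - alpha = \sum_(i < d) m i - \sum_(i < d) m i * pol i.
    by rewrite Hm.2 threshold_activation.
  rewrite (threshold_reward Hs Hlo Hhi) -subsidized_mean; apply: (duality_eq Hm.2 Hstat) => i.
  split=> Hi; [apply: Hact; exact: threshold_active_support Hi
              |apply: Hpas; exact: threshold_passive_support Hi].
rewrite VrelE; apply/esym/sup_attained.
  exists pol, (state0 d0); split => //; first by move=> y; rewrite Hmean (threshold_activation Hlo Hhi).
  by rewrite Hmean (threshold_reward Hs Hlo Hhi).
rewrite -(addrK (whittle_index P0 P1 R0 R1 s * (1 - alpha)) (rho_formula _ _ _ _)) Hg.
exact: (relaxed_gains_bound (alpha := alpha) HP0 HP1 Huni d0 HQ).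
Qed.

Lemma card_set_sum (R : realType) (T : finType) (Q : pred T) :
  (#|[set n | Q n]|)%:R = \sum_(n : T) (Q n)%:R :> R.
Proof.
rewrite -sum1_card natr_sum big_mkcond /=; apply: eq_bigr => n _.
by rewrite (_ : (n \in _) = Q n); [case: (Q n)|exact: asboolb].
Qed.

Section WIPReward.
Variables (R : realType) (d N : nat) (S : 'I_N -> 'I_d).

Let count (i : 'I_d) : R := (#|[set n | S n == i]|)%:R.

Lemma count_sum (Q : pred 'I_d) :
  \sum_(i < d | Q i) count i = \sum_(n < N) (Q (S n))%:R.
Proof.
have sum1 (P : pred 'I_N) : \sum_(n < N) (P n)%:R = \sum_(n < N | P n) 1 :> R.
  by rewrite [RHS]big_mkcond /=; apply: eq_bigr => n _; case: (P n).
rewrite sum1 (partition_big (fun n => S n) Q) //=; apply: eq_bigr => i Qi.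
rewrite /count card_set_sum sum1; apply: eq_bigl => n.
by case: eqP => [->|_]; rewrite ?Qi ?andbF.
Qed.

Lemma config_simplex : (0 < N)%N -> simplex (config R S).
Proof.
move=> N0; split => [i|]; first by rewrite /config divr_ge0 ?ler0n.
rewrite /config -mulr_suml; have := count_sum xpredT; rewrite /count => ->.
by rewrite sumr_const card_ord mulfV // pnatr_eq0 -lt0n.
Qed.

Section WIP.
Variables (nu : 'I_d -> R) (K : nat) (a : 'I_N -> bool).
Hypotheses (Hord : forall i j : 'I_d, (i < j)%N -> nu j < nu i)
  (Hcard : #|[set n | a n]| = K)
  (Hwip : forall n n', a n -> ~~ a n' -> nu (S n') <= nu (S n)).

Let active_count : K%:R = \sum_(n < N) (a n)%:R :> R.
Proof. by rewrite -Hcard card_set_sum. Qed.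

Lemma wip_order n n' : a n -> ~~ a n' -> (S n <= S n')%N.
Proof.
move=> Ha Hna; rewrite leqNgt; apply/negP => /Hord.
by rewrite ltNge Hwip.
Qed.

Variable s : 'I_d.
Hypotheses (Hlo : \sum_(i < d | (i < s)%N) count i <= K%:R)
  (Hhi : K%:R < \sum_(i < d | (i <= s)%N) count i).

(* A passive bandit below s would leave fewer than K activations for the
   bandits above it. *)
Lemma wip_active_below n0 : (S n0 < s)%N -> a n0.
Proof.
move=> Hn0; apply: contraT => Hna.
have H1 : \sum_(n < N) (a n)%:R
          <= \sum_(n < N) ((S n < s)%N && (n != n0))%:R :> R.
  apply: ler_sum => n _; case E: (a n) => //=.
  rewrite (leq_ltn_trans (wip_order E Hna) Hn0) /=.
  by case: eqP => [Heq|//]; move: Hna; rewrite -Heq E.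
have H2 : \sum_(n < N) ((S n < s)%N && (n != n0))%:R
          = \sum_(i < d | (i < s)%N) count i - 1 :> R.
  rewrite count_sum (bigD1 n0) //= [in RHS](bigD1 n0) //= eqxx andbF Hn0 /=.
  by rewrite add0r addrAC subrr add0r; apply: eq_bigr => n Hn; rewrite Hn andbT.
move: Hlo H1; rewrite -active_count H2.
by move: (\sum_(i < d | _) count i) => Cl; lra.
Qed.

(* An active bandit above s would force more than K activations. *)
Lemma wip_passive_above n0 : (s < S n0)%N -> ~~ a n0.
Proof.
move=> Hn0; apply/negP => Ha0.
have H1 : \sum_(n < N) ((S n <= s)%N || (n == n0))%:R
          <= \sum_(n < N) (a n)%:R :> R.
  apply: ler_sum => n _; case E: (a n); first by case: (_ || _); rewrite ?ler01.
  case/boolP: ((S n <= s)%N || (n == n0)) => //= /orP [Hsn|/eqP Hn].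
    by have := leq_trans (wip_order Ha0 (negbT E)) Hsn; rewrite leqNgt Hn0.
  by move: E; rewrite Hn Ha0.
have H2 : \sum_(n < N) ((S n <= s)%N || (n == n0))%:R
          = \sum_(i < d | (i <= s)%N) count i + 1 :> R.
  rewrite count_sum (bigD1 n0) //= [in RHS](bigD1 n0) //= eqxx orbT.
  rewrite leqNgt Hn0 /= add0r addrC; congr (_ + _); apply: eq_bigr => n Hn.
  by rewrite (negbTE Hn) orbF.
move: Hhi H1; rewrite -active_count H2.
by move: (\sum_(i < d | _) count i) => Cl; lra.
Qed.

Let active_at_s : R := \sum_(n < N | S n == s) (a n)%:R.

Let count_byE (i : 'I_d) : count i = \sum_(n < N | S n == i) 1.
Proof.
rewrite /count card_set_sum [RHS]big_mkcond /=.
by apply: eq_bigr => n _; case: (S n == i).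
Qed.

Lemma wip_active_split : K%:R = \sum_(i < d | (i < s)%N) count i + active_at_s.
Proof.
rewrite active_count (partition_big (fun n => S n) xpredT) //= (sum_zone_split s) /=.
rewrite [X in _ + X](_ : _ = 0); last first.
  apply: big1 => i Hi; apply: big1 => n /eqP Hn.
  by rewrite (negbTE (wip_passive_above _)) // Hn.
rewrite addr0; congr (_ + _); apply: eq_bigr => i Hi.
by rewrite count_byE; apply: eq_bigr => n /eqP Hn; rewrite wip_active_below // Hn.
Qed.

Lemma wip_total_reward (R0 R1 : 'I_d -> R) :
  \sum_(n < N) (if a n then R1 (S n) else R0 (S n))
  = \sum_(i < d | (i < s)%N) count i * R1 i
    + (active_at_s * R1 s + (count s - active_at_s) * R0 s)
    + \sum_(i < d | (s < i)%N) count i * R0 i.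
Proof.
rewrite (partition_big (fun n => S n) xpredT) //= (sum_zone_split s) /=.
congr (_ + _ + _).
- apply: eq_bigr => i Hi; rewrite count_byE mulr_suml; apply: eq_bigr => n /eqP Hn.
  by rewrite wip_active_below ?Hn // mul1r.
- rewrite count_byE /active_at_s -sumrB !mulr_suml -big_split /=.
  by apply: eq_bigr => n /eqP ->; case: (a n) => /=; ring.
- apply: eq_bigr => i Hi; rewrite count_byE mulr_suml; apply: eq_bigr => n /eqP Hn.
  by rewrite (negbTE (wip_passive_above _)) ?Hn // mul1r.
Qed.

End WIP.

Lemma wip_reward_formula (nu : 'I_d -> R) (alpha : R) (K : nat)
  (a : 'I_N -> bool) (R0 R1 : 'I_d -> R) :
  (forall i j : 'I_d, (i < j)%N -> nu j < nu i) -> 0 <= alpha -> alpha < 1 ->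
  (0 < N)%N -> K%:R = alpha * N%:R -> wip_action nu K S a ->
  inst_reward R0 R1 S a = rho_formula R0 R1 alpha (config R S).
Proof.
move=> Hord a0 a1 N0 HK [Hcard Hwip].
have [s [Hs Hlo Hhi]] := s_of_spec (config_simplex N0) a0 a1.
have Nr : 0 < N%:R :> R by rewrite ltr0n.
have Hcfg (Q : pred 'I_d) (F : 'I_d -> R) :
    \sum_(i < d | Q i) config R S i * F i
    = N%:R^-1 * \sum_(i < d | Q i) count i * F i.
  by rewrite mulr_sumr; apply: eq_bigr => i _; rewrite /config /count; ring.
have Hcfg1 (Q : pred 'I_d) :
    \sum_(i < d | Q i) config R S i = N%:R^-1 * \sum_(i < d | Q i) count i.
  by rewrite mulr_sumr; apply: eq_bigr => i _; rewrite /config /count mulrC.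
have Halpha : alpha = N%:R^-1 * K%:R by rewrite HK mulrCA mulVf ?mulr1 // gt_eqF.
rewrite !Hcfg1 Halpha !ler_pM2l ?ltr_pM2l ?invr_gt0 // in Hlo Hhi.
rewrite /inst_reward (wip_total_reward Hord Hcard Hwip Hlo Hhi) /rho_formula Hs.
by rewrite !Hcfg !Hcfg1 Halpha (wip_active_split Hord Hcard Hwip Hlo Hhi) sum_le_split; ring.
Qed.

End WIPReward.

Theorem mainTheorem7 (R : realType) (d : nat)
  (P0 P1 : 'M[R]_d) (R0 R1 : 'I_d -> R) (alpha : R) :
  stochastic P0 -> stochastic P1 ->
  0 < alpha < 1 ->
  unichain P0 P1 ->
  strictly_indexable P0 P1 R0 R1 ->
  (* states are labelled so that nu_1 > nu_2 > ... > nu_d *)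
  (forall i j : 'I_d, (i < j)%N ->
     whittle_index P0 P1 R0 R1 j < whittle_index P0 P1 R0 R1 i) ->
  (* (i) the WIP reward in any configuration of any N-bandit system *)
  (forall (N K : nat) (S : 'I_N -> 'I_d) (a : 'I_N -> bool),
     (0 < N)%N -> K%:R = alpha * N%:R ->
     wip_action (whittle_index P0 P1 R0 R1) K S a ->
     inst_reward R0 R1 S a = rho_formula R0 R1 alpha (config R S))
  /\
  (* (ii) at the fixed point m* of phi *)
  (forall m : 'I_d -> R, simplex m -> phi P0 P1 alpha m = m ->
     rho_formula R0 R1 alpha m = Vrel P0 P1 R0 R1 alpha).
Proof.
(* distinctness of the indices is already implied by their strict ordering *)
move=> HP0 HP1 Ha Huni [Hind _] Hord; split.
  move=> N K S a N0 HK Hw; have /andP [a0 a1] := Ha.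
  exact: wip_reward_formula R0 R1 Hord (ltW a0) a1 N0 HK Hw.
exact: rho_fixed_point_relaxed_value HP0 HP1 Ha Huni Hind Hord.
Qed.
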